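(* Let $\underline{X}$ be an observation from a distribution $P_{(\theta,\underline{\eta})}$ indexed by $(\theta,\underline{\eta})$ in a parameter space $H$, with real parameter of interest $\theta$ ranging over $[A,B]$ (possibly $B=+\infty$ or $A=-\infty$), and fix $\alpha\in[0,1]$. For a lower one-sided confidence interval $C(\underline{X})=[L(\underline{X}),B]$ with $L\ge A$, define its modification $C^M$ by $$h(\underline{x},\theta_0)=\sup_{(\theta,\underline{\eta})\in H,\ \theta\le\theta_0}P_{(\theta,\underline{\eta})}\big(L(\underline{x})\le L(\underline{X})\big),\qquad C^M(\underline{x})=\overline{\{\theta_0: h(\underline{x},\theta_0)>\alpha\}}$$ (this is the h-function of the test statistic $\theta_0-L(\underline{x})$ for $H_0:\theta\le\theta_0$ vs $H_A:\theta>\theta_0$). Let $C_l(\underline{X})=[L_l(\underline{X}),B]$ be a lower one-sided confidence interval of any level, let $C_l^{M1}=C_l^M$, $C_l^{M(k+1)}=(C_l^{Mk})^M$, and $C_l^{M\infty}=\bigcap_{k\ge1}C_l^{Mk}$. Then: (i) $C_l^M(\underline{X})$ is of level $1-\alpha$, i.e. $\inf_{(\theta,\underline{\eta})\in H}P_{(\theta,\underline{\eta})}(\theta\in C_l^M(\underline{X}))\ge1-\alpha$; (ii) $C_l^{M\infty}(\underline{X})=C_l^M(\underline{X})$; (iii) writing $C_l^M(\underline{X})=[L_l^M(\underline{X}),B]$, $C_l^M$ is the smallest interval in the class $\mathcal{C}_l$ of all $1-\alpha$ exact lower one-sided intervals $C(\underline{X})=[L(\underline{X}),B]$ such that for all $\underline{x}',\underline{x}$: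 $L(\underline{x}')\le L(\underline{x})$ whenever $L_l(\underline{x}')\le L_l(\underline{x})$, and $L(\underline{x}')=L(\underline{x})$ whenever $L_l(\underline{x}')=L_l(\underline{x})$; i.e. for any $C=[L,B]\in\mathcal{C}_l$, $L_l^M(\underline{X})\ge L(\underline{X})$.
   Context: For a set $A'$ of parameter values, $\overline{A'}$ denotes the smallest closed simply connected set (closed interval) containing $A'$. An interval $C(\underline{X})$ for $\theta$ is ''$1-\alpha$ exact'' if $\inf_{(\theta,\underline{\eta})\in H}P_{(\theta,\underline{\eta})}(\theta\in C(\underline{X}))\ge1-\alpha$. *)

From HB Require Import structures.
From mathcomp Require Import all_boot all_order all_algebra.
From mathcomp Require Import all_classical all_reals all_analysis.
From mathcomp Require Import lebesgue_measure measurable_realfun.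
Set Implicit Arguments. Unset Strict Implicit. Unset Printing Implicit Defensive.
Import Order.TTheory GRing.Theory Num.Theory numFieldNormedType.Exports.
Local Open Scope classical_set_scope.
Local Open Scope ring_scope.

Section Defs.
Context {R : realType} {d : measure_display} {T : measurableType d} {Eta : Type}.
Variables (H : set (R * Eta)) (P : R * Eta -> probability T R).
Variables (A B : \bar R) (alpha : R).

Definition cl_hull (S : set R) : set R :=
  \bigcap_(I in [set I : set R | closed I /\ is_interval I /\ S `<=` I]) I.

Definition lower_ci (L : T -> \bar R) (x : T) : set R :=
  [set t : R | (L x <= t%:E)%E /\ (t%:E <= B)%E].

Definition hfun (L : T -> \bar R) (x : T) (theta0 : R) : \bar R :=
  ereal_sup [set P p [set y | (L x <= L y)%E] | p in [set p | H p /\ p.1 <= theta0]].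

Definition CM (L : T -> \bar R) (x : T) : set R :=
  cl_hull [set theta0 : R | (A <= theta0%:E)%E /\ (theta0%:E <= B)%E
                            /\ (alpha%:E < hfun L x theta0)%E].

Definition LM (L : T -> \bar R) (x : T) : \bar R :=
  ereal_inf [set t%:E | t in CM L x].

(* C^{Mk} for k >= 1 is CM (iter (k-1) LM L) ; C^{M oo} is their intersection *)
Definition CMinf (L : T -> \bar R) (x : T) : set R :=
  \bigcap_(k in [set: nat]) CM (iter k LM L) x.

Definition exact (C : T -> set R) : Prop :=
  ((1 - alpha)%:E <= ereal_inf [set P p [set y | C y p.1] | p in H])%E.

Definition class_l (Ll L : T -> \bar R) : Prop :=
  (forall x, (A <= L x)%E) /\
  exact (lower_ci L) /\
  (forall x' x, (Ll x' <= Ll x)%E -> (L x' <= L x)%E) /\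
  (forall x' x, Ll x' = Ll x -> L x' = L x).

End Defs.

From HB Require Import structures.
From mathcomp Require Import all_boot all_order all_algebra.
From mathcomp Require Import all_classical all_reals all_analysis.
From mathcomp Require Import lebesgue_measure measurable_realfun.
Set Implicit Arguments.
Unset Strict Implicit.
Unset Printing Implicit Defensive.
Import Order.TTheory GRing.Theory Num.Theory numFieldNormedType.Exports.
Local Open Scope classical_set_scope.
Local Open Scope ring_scope.

(* Everything rests on the validity of p-values: for a probability mu and a
   measurable statistic f, the p-value y |-> mu (f >= f y) is at most alpha
   with mu-probability at most alpha.  Under a parameter (theta, eta) of H the
   h-function h(X, theta) dominates this p-value for f = L, so theta lies in
   C^M(X) with probability at least 1 - alpha; this is (i), for any measurable
   L.  The modification C^M(x) shrinks as L(x) grows and grows when L is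
   replaced by a statistic whose upper level sets are larger; since L^M is a
   nondecreasing function of L, C^M(k+1) contains C^Mk, whence (ii).  For
   (iii), if [L, B] is exact and ordered like L_l and theta0 < L(x), then for
   every theta <= theta0 the event {L_l >= L_l(x)} lies inside the
   non-coverage event of [L, B], so h(x, theta0) <= alpha.  Measurability is
   never an issue: a nondecreasing function of a measurable statistic is
   measurable. *)

Lemma exists_seq_decreasing_to {R : realType} (c : \bar R) : c != +oo%E ->
  exists a : nat -> \bar R, [/\ nonincreasing_seq a, forall n, (c < a n)%E &
    forall v, (c < v)%E -> exists n, (a n < v)%E].
Proof.
case: c => [r| |] // _.
- exists (fun n => (r + n.+1%:R^-1)%:E); split.
  + by move=> n m nm; rewrite lee_fin lerD2l lef_pV2 ?posrE ?ltr0n // ler_nat.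
  + by move=> n; rewrite lte_fin ltrDl invr_gt0 ltr0n.
  + case=> [s| |] //; last by exists 0%N; rewrite ltey.
    by rewrite lte_fin => /ltr_add_invr [k hk]; exists k; rewrite lte_fin.
- exists (fun n => (- n%:R)%:E); split.
  + by move=> n m nm; rewrite lee_fin lerN2 ler_nat.
  + by move=> n; rewrite ltNye.
  + case=> [s| |] //; last by exists 0%N; rewrite ltey.
    move=> _; exists (Num.truncn (- s)).+1; rewrite lte_fin ltrNl.
    exact: truncnS_gt.
Qed.

Lemma probability_setC_le d (T : measurableType d) (R : realType)
    (mu : probability T R) (S : set T) (a : R) : measurable S ->
  (mu (~` S) <= a%:E)%E = ((1 - a)%:E <= mu S)%E.
Proof.
move=> mS; rewrite probability_setC //.
rewrite -(fineK (fin_num_measure mu _ mS)).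
by rewrite -EFinB !lee_fin lerBlDr addrC -lerBlDr.
Qed.

Section level_sets.
Local Open Scope ereal_scope.
Context {d : measure_display} {T : measurableType d} {R : realType}.
Variable f : T -> \bar R.

Definition upset (Q : set T) := forall y y', Q y -> f y <= f y' -> Q y'.

Definition downset (Q : set T) := forall y y', Q y -> f y' <= f y -> Q y'.

Definition nondecreasing_in (g : T -> \bar R) :=
  forall y y', f y <= f y' -> g y <= g y'.

Lemma upsetC Q : downset Q -> upset (~` Q).
Proof. by move=> dQ y y' nQy le Qy'; apply: nQy (dQ _ _ Qy' le). Qed.

Lemma upset_gt_inf Q y : upset Q -> ereal_inf (f @` Q) < f y -> Q y.
Proof. by move=> uQ /ereal_inf_lt[_ [z Qz <-]] /ltW; apply: uQ. Qed.

Hypothesis mf : measurable_fun setT f.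

Lemma measurable_fun_ge c : measurable [set y | c <= f y].
Proof.
by rewrite -[X in measurable X]setTI; exact: emeasurable_fun_c_infty.
Qed.

Lemma measurable_fun_gt c : measurable [set y | c < f y].
Proof.
by rewrite -[X in measurable X]setTI; exact: emeasurable_fun_o_infty.
Qed.

(* An upset of [f] is [f >= c] or [f > c] for [c] its infimum, depending on
   whether the infimum is attained. *)
Lemma measurable_upset Q : upset Q -> measurable Q.
Proof.
move=> uQ; set c := ereal_inf (f @` Q).
have Q_ge y : Q y -> c <= f y by move=> Qy; apply: ereal_inf_lbound; exists y.
have [[y0 Qy0 fy0]|] := pselect (exists2 y0, Q y0 & f y0 = c).
  suff -> : Q = [set y | c <= f y] by exact: measurable_fun_ge.
  by apply/seteqP; split=> y; [exact: Q_ge|rewrite -fy0; exact: uQ].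
move=> Nattained; suff -> : Q = [set y | c < f y] by exact: measurable_fun_gt.
apply/seteqP; split=> y; last exact: upset_gt_inf.
move=> Qy /=; rewrite lt_neqAle Q_ge // andbT; apply/eqP => fy.
by apply: Nattained; exists y.
Qed.

Lemma measurable_downset Q : downset Q -> measurable Q.
Proof.
by move=> dQ; rewrite -[Q]setCK; apply/measurableC/measurable_upset/upsetC.
Qed.

Lemma measurable_fun_nondecreasing_in g :
  nondecreasing_in g -> measurable_fun setT g.
Proof.
move=> ndg; apply: (measurability _ (ErealGenCInfty.measurableE R)) => //.
move=> _ [_ [r ->] <-]; apply: measurable_upset => y y' /= [_].
rewrite !in_itv /= !andbT => gy le; split => //.
exact: le_trans gy (ndg _ _ le).
Qed.

Lemma measure_gt_le (mu : {measure set T -> \bar R}) c a : 0 <= a ->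
  (forall v, c < v -> mu [set z | v < f z] <= a) ->
  mu [set z | c < f z] <= a.
Proof.
move=> a0 bound_gt; have [->|cNy] := eqVneq c +oo.
  suff -> : [set z | +oo < f z] = set0 by rewrite measure0.
  by apply/seteqP; split=> z //=; rewrite ltNge leey.
have [s [s_noninc c_lt_s s_to_c]] := exists_seq_decreasing_to cNy.
pose F n := [set z | s n < f z].
have mF n : measurable (F n) by exact: measurable_fun_gt.
have F_nondecr : nondecreasing_seq F.
  move=> n m nm; apply/subsetPset => z /=.
  exact: le_lt_trans (s_noninc _ _ nm).
have -> : [set z | c < f z] = \bigcup_n F n.
  apply/seteqP; split=> z /=; first by move/s_to_c => [n]; exists n.
  by move=> [n _]; apply: lt_trans (c_lt_s n).
have mU : measurable (\bigcup_n F n) by exact: bigcup_measurable.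
have cvgF := nondecreasing_cvg_mu (mu := mu) mF mU F_nondecr.
rewrite -(cvg_lim _ cvgF) //; apply: lime_le; first exact: cvgP cvgF.
by apply: nearW => n; exact: bound_gt.
Qed.

Lemma measurable_pvalue_le (mu : {measure set T -> \bar R}) a :
  measurable [set y | mu [set z | f y <= f z] <= a].
Proof.
apply: measurable_upset => y y' /= le_a le; apply: le_trans le_a.
apply: le_measure; rewrite ?inE; try exact: measurable_fun_ge.
by move=> z /=; apply: le_trans.
Qed.

Lemma pvalue_le (mu : probability T R) a : (0 <= a)%R ->
  mu [set y | mu [set z | f y <= f z] <= a%:E] <= a%:E.
Proof.
move=> a0; set D := [set y | _ <= a%:E]; set c := ereal_inf (f @` D).
have mD : measurable D by exact: measurable_pvalue_le.
have D_ge y : D y -> c <= f y by move=> Dy; apply: ereal_inf_lbound; exists y.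
have [[y0 Dy0 fy0]|Nattained] := pselect (exists2 y0, D y0 & f y0 = c).
  apply: le_trans Dy0; apply: le_measure; rewrite ?inE //.
    exact: measurable_fun_ge.
  by move=> z /D_ge; rewrite fy0.
apply: (@le_trans _ _ (mu [set z | c < f z])).
  apply: le_measure; rewrite ?inE //; first exact: measurable_fun_gt.
  move=> z Dz /=; rewrite lt_neqAle D_ge // andbT; apply/eqP => fz.
  by apply: Nattained; exists z.
apply: measure_gt_le; first by rewrite lee_fin.
move=> v /ereal_inf_lt[_ [y Dy <-]] fy_lt_v; apply: le_trans Dy.
apply: le_measure; rewrite ?inE.
- exact: measurable_fun_gt.
- exact: measurable_fun_ge.
- by move=> z /= /ltW; apply: le_trans; apply: ltW.
Qed.

End level_sets.

Section closed_hull.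
Local Open Scope ereal_scope.
Context {R : realType}.
Implicit Types (S I : set R) (e : \bar R).

Lemma subset_cl_hull S : S `<=` cl_hull S.
Proof. by move=> t St I [_ [_]]; apply. Qed.

Lemma cl_hull_subset S1 S2 : S1 `<=` S2 -> cl_hull S1 `<=` cl_hull S2.
Proof.
move=> S12 t S1t I [cI [iI S2I]]; apply: S1t; do !split => //.
exact: subset_trans S2I.
Qed.

Lemma cl_hull_sub S I :
  closed I -> is_interval I -> S `<=` I -> cl_hull S `<=` I.
Proof. by move=> cI iI SI t; apply. Qed.

Lemma cl_hull_ge e S : (forall t, S t -> e <= t%:E) ->
  cl_hull S `<=` [set t | e <= t%:E].
Proof.
move=> Se; apply: cl_hull_sub => //; last first.
  by move=> x y /= ex _ z /andP[xz _]; apply: le_trans ex _; rewrite lee_fin.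
case: e {Se} => [r| |].
- by under eq_set do rewrite lee_fin; exact: closed_ge.
- rewrite (_ : [set t | +oo <= t%:E] = set0); first exact: closed0.
  by apply/seteqP; split => t //=; rewrite leye_eq.
- rewrite (_ : [set t | -oo <= t%:E] = setT); first exact: closedT.
  by apply/seteqP; split => t //= _; rewrite leNye.
Qed.

Lemma cl_hull_le e S : (forall t, S t -> t%:E <= e) ->
  cl_hull S `<=` [set t | t%:E <= e].
Proof.
move=> Se; apply: cl_hull_sub => //; last first.
  by move=> x y /= _ ey z /andP[_ zy]; apply: le_trans ey; rewrite lee_fin.
case: e {Se} => [r| |].
- by under eq_set do rewrite lee_fin; exact: closed_le.
- rewrite (_ : [set t | t%:E <= +oo] = setT); first exact: closedT.
  by apply/seteqP; split => t //= _; rewrite leey.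
- rewrite (_ : [set t | t%:E <= -oo] = set0); first exact: closed0.
  by apply/seteqP; split => t //=; rewrite leeNy_eq.
Qed.

End closed_hull.

Section modification.
Local Open Scope ereal_scope.
Context {R : realType} {d : measure_display} {T : measurableType d}.
Context {Eta : Type}.
Variables (H : set (R * Eta)) (P : R * Eta -> probability T R).
Variables (A B : \bar R) (alpha : R).
Hypothesis hH : forall p, H p -> A <= p.1%:E /\ p.1%:E <= B.

Local Notation hfun := (hfun H P).
Local Notation CM := (CM H P A B alpha).
Local Notation LM := (LM H P A B alpha).
Local Notation CMinf := (CMinf H P A B alpha).
Local Notation exact := (exact H P alpha).
Local Notation lower_ci := (lower_ci B).
Local Notation class_l := (class_l H P A B alpha).

Implicit Types (L : T -> \bar R) (C : T -> set R) (x y : T) (t : R).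

Lemma exact_coverage C p :
  exact C -> H p -> (1 - alpha)%:E <= P p [set y | C y p.1].
Proof.
by move=> exC Hp; apply: le_trans exC _; apply: ereal_inf_lbound; exists p.
Qed.

Lemma prob_le_hfun L x p : H p -> P p [set y | L x <= L y] <= hfun L x p.1.
Proof.
move=> Hp; apply: le_ereal_sup_tmp.
by exists (P p [set y | L x <= L y]) => //; exists p.
Qed.

Lemma hfun_le L L' x x' t : measurable_fun setT L -> measurable_fun setT L' ->
  [set y | L x' <= L y] `<=` [set y | L' x <= L' y] ->
  hfun L x' t <= hfun L' x t.
Proof.
move=> mL mL' sub; apply: ge_ereal_sup => _ [p Hp <-].
apply: le_ereal_sup_tmp; exists (P p [set y | L' x <= L' y]); first by exists p.
by apply: le_measure; rewrite ?inE; try exact: measurable_fun_ge.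
Qed.

Lemma CM_subset L L' x x' : measurable_fun setT L -> measurable_fun setT L' ->
  [set y | L x' <= L y] `<=` [set y | L' x <= L' y] ->
  CM L x' `<=` CM L' x.
Proof.
move=> mL mL' sub; apply: cl_hull_subset => t [At [tB lt]]; do !split => //.
by apply: lt_le_trans lt _; exact: hfun_le sub.
Qed.

Lemma CM_antitone L x x' : measurable_fun setT L -> L x <= L x' ->
  CM L x' `<=` CM L x.
Proof. by move=> mL le; apply: CM_subset => // y; exact: le_trans. Qed.

Lemma CM_subset_nondecreasing_in L L' x :
  measurable_fun setT L -> measurable_fun setT L' -> nondecreasing_in L L' ->
  CM L x `<=` CM L' x.
Proof. by move=> mL mL' ndL'; apply: CM_subset => // y /ndL'. Qed.

Lemma CM_le_B L x : CM L x `<=` [set t | t%:E <= B].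
Proof. by apply: cl_hull_le => t [_ []]. Qed.

Lemma LM_le L x t : CM L x t -> LM L x <= t%:E.
Proof. by move=> CMt; apply: ereal_inf_lbound; exists t. Qed.

Lemma LM_ge_A L x : A <= LM L x.
Proof.
apply: le_ereal_inf_tmp => _ [t CMt <-].
by move: CMt; apply: cl_hull_ge => s [].
Qed.

Lemma LM_nondecreasing_in L :
  measurable_fun setT L -> nondecreasing_in L (LM L).
Proof.
move=> mL x x' le; apply: ereal_inf_le_tmp; apply: image_subset.
exact: CM_antitone.
Qed.

Lemma measurable_LM L : measurable_fun setT L -> measurable_fun setT (LM L).
Proof.
move=> mL; apply: (measurable_fun_nondecreasing_in mL).
exact: LM_nondecreasing_in.
Qed.

Lemma measurable_CM L t :
  measurable_fun setT L -> measurable [set y | CM L y t].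
Proof.
move=> mL; apply: (measurable_downset mL) => y y' CMy le.
exact: CM_antitone le _ CMy.
Qed.

Lemma measurable_lower_ci L t :
  measurable_fun setT L -> measurable [set y | lower_ci L y t].
Proof.
move=> mL; apply: (measurable_downset mL) => y y' [Lyt tB] le; split => //.
exact: le_trans le Lyt.
Qed.

Lemma CM_cover L x p : H p -> alpha%:E < P p [set y | L x <= L y] -> CM L x p.1.
Proof.
move=> Hp lt; apply: subset_cl_hull; have [Ap pB] := hH Hp; do !split => //.
exact: lt_le_trans lt (prob_le_hfun L x Hp).
Qed.

Lemma exact_CM L : (0 <= alpha)%R -> measurable_fun setT L -> exact (CM L).
Proof.
move=> a0 mL; apply: le_ereal_inf_tmp => _ [p Hp <-].
rewrite -probability_setC_le; last exact: measurable_CM.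
apply: le_trans (pvalue_le mL (P p) a0); apply: le_measure; rewrite ?inE.
- exact/measurableC/measurable_CM.
- exact: measurable_pvalue_le.
- by move=> y /= NCM; rewrite leNgt; apply/negP => /(CM_cover Hp).
Qed.

Lemma CMinf_CM L x : measurable_fun setT L -> CMinf L x = CM L x.
Proof.
move=> mL; apply/seteqP; split=> [t /(_ 0%N I) //|t CMt k _].
have mLk n : measurable_fun setT (iter n LM L).
  by elim: n => //= n IH; exact: measurable_LM.
elim: k => //= k IH.
have mLk' := mLk k.
exact: (CM_subset_nondecreasing_in mLk' (measurable_LM mLk')
  (LM_nondecreasing_in mLk') IH).
Qed.

Lemma class_l_LM Ll :
  (0 <= alpha)%R -> measurable_fun setT Ll -> class_l Ll (LM Ll).
Proof.
move=> a0 mLl; have ndLM := LM_nondecreasing_in mLl.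
split; first exact: LM_ge_A.
split.
  apply: le_ereal_inf_tmp => _ [p Hp <-].
  apply: le_trans (exact_coverage (exact_CM a0 mLl) Hp) _.
  apply: le_measure; rewrite ?inE.
  - exact: measurable_CM.
  - exact/measurable_lower_ci/measurable_LM.
  - by move=> y /= CMy; split; [exact: LM_le|exact: CM_le_B CMy].
split; first exact: ndLM.
by move=> x' x e; apply/le_anti; rewrite !ndLM ?e.
Qed.

Lemma class_l_le_LM Ll L x :
  measurable_fun setT Ll -> class_l Ll L -> L x <= LM Ll x.
Proof.
move=> mLl [_ [exL [ndL _]]].
have mL := measurable_fun_nondecreasing_in mLl ndL.
apply: le_ereal_inf_tmp => _ [t CMt <-]; move: CMt; apply: cl_hull_ge.
move=> t0 [_ [_ alpha_lt]]; rewrite leNgt; apply/negP => t0_lt.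
move: alpha_lt; apply/negP; rewrite -leNgt.
apply: ge_ereal_sup => _ [p [Hp pt0] <-].
have miscoverage : P p (~` [set y | lower_ci L y p.1]) <= alpha%:E.
  rewrite probability_setC_le; last exact: measurable_lower_ci.
  exact: exact_coverage exL Hp.
apply: le_trans miscoverage.
apply: le_measure; rewrite ?inE.
- exact: measurable_fun_ge.
- exact/measurableC/measurable_lower_ci.
- move=> y /ndL Lxy [Lyp _]; have : L x <= t0%:E.
    by rewrite (le_trans Lxy) // (le_trans Lyp) // lee_fin.
  by rewrite leNgt t0_lt.
Qed.

End modification.

Theorem theorem4 (R : realType) (d : measure_display) (T : measurableType d)
  (Eta : Type) (H : set (R * Eta)) (P : R * Eta -> probability T R)
  (A B : \bar R) (alpha : R)
  (halpha : 0 <= alpha <= 1)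
  (hH : forall p, H p -> (A <= p.1%:E)%E /\ (p.1%:E <= B)%E)
  (Ll : T -> \bar R)
  (hLl_meas : measurable_fun [set: T] (Ll : T -> \bar R))
  (hLl_A : forall x, (A <= Ll x)%E) :
  (* (i) *)
  exact H P alpha (CM H P A B alpha Ll) /\
  (* (ii) *)
  (forall x, CMinf H P A B alpha Ll x = CM H P A B alpha Ll x) /\
  (* (iii) *)
  (class_l H P A B alpha Ll (LM H P A B alpha Ll) /\
   forall L, class_l H P A B alpha Ll L ->
     forall x, (L x <= LM H P A B alpha Ll x)%E).
Proof.
have [a0 _] := andP halpha.
split; first exact: exact_CM.
split; first by move=> x; exact: CMinf_CM.
split; first exact: class_l_LM.
by move=> L hL x; exact: class_l_le_LM.
Qed.
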